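(* Let $k_1<k_2$ be integers with $k_1\ge 3$, and let $n$ be a positive integer. If $\nu_{k_1}(n)>0$, then $\nu_{k_2}(n+k_2-k_1)>0$.
   Context: For an integer $k\ge 3$ and a positive integer $n$, $\nu_k(n)$ denotes the number of $k$-tuples of integers $(x_1,\dots,x_k)$ with $1\le x_1\le x_2\le\dots\le x_k$ such that $x_1x_2\cdots x_k+x_1+x_2+\dots+x_k=n$. *)

From mathcomp Require Import all_boot all_order.
Set Implicit Arguments. Unset Strict Implicit. Unset Printing Implicit Defensive.

Definition is_sol (k n : nat) (s : seq nat) : bool :=
  [&& size s == k, all (fun x => 0 < x) s, sorted leq s &
      (\prod_(x <- s) x) + (\sum_(x <- s) x) == n].

(* nu k n = number of such k-tuples.  Every coordinate of a solution is at
   most n (x_i <= x_1+...+x_k <= n), so enumerating tuples with entries in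
   {0,...,n} counts all of them. *)
Definition nu (k n : nat) : nat :=
  #|[set t : k.-tuple 'I_n.+1 | is_sol k n (map val t)]|.

(** Prepending ones to a solution keeps it a solution up to a shift: each
    extra coordinate 1 leaves the product unchanged, adds 1 to the sum, and
    fits in front of a sorted tuple of positive integers. Prepending
    [k2 - k1] ones therefore does the job. *)

From mathcomp Require Import all_boot all_order.

Set Implicit Arguments.
Unset Strict Implicit.
Unset Printing Implicit Defensive.

Lemma leq_sum_mem (s : seq nat) x : x \in s -> x <= \sum_(y <- s) y.
Proof.
by move=> /perm_to_rem s_perm; rewrite (perm_big _ s_perm) big_cons leq_addr.
Qed.

Lemma sorted_nseq1_cat d (s : seq nat) :
  sorted leq s -> all (leq 1) s -> sorted leq (nseq d 1 ++ s).
Proof.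
move=> sorted_s pos_s; elim: d => [|d IHd] //=.
rewrite (path_sortedE leq_trans) IHd andbT all_cat pos_s andbT.
by rewrite all_nseq orbT.
Qed.

Lemma is_sol_nseq1_cat d k n s :
  is_sol k n s -> is_sol (d + k) (d + n) (nseq d 1 ++ s).
Proof.
case/and4P=> /eqP size_s pos_s sorted_s /eqP sol_s.
rewrite /is_sol size_cat size_nseq size_s eqxx all_cat all_nseq orbT pos_s.
rewrite sorted_nseq1_cat // !big_cat !big_nseq iter_muln_1 iter_addn_0.
by rewrite exp1n mul1n addnCA /= mul1n sol_s.
Qed.

Lemma mem_is_sol_leq k n s x : is_sol k n s -> x \in s -> x <= n.
Proof.
case/and4P=> _ _ _ /eqP <- /leq_sum_mem le_x_sum.
exact: leq_trans le_x_sum (leq_addl _ _).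
Qed.

Lemma nu_gt0P k n : reflect (exists s, is_sol k n s) (0 < nu k n).
Proof.
rewrite /nu card_gt0; apply: (iffP (set0Pn _)) => [[t]|[s sol_s]].
  by rewrite inE => sol_t; exists (map val t).
have size_s : size (map (@inord n) s) == k.
  by case/and4P: sol_s => /eqP size_s _ _ _; rewrite size_map size_s.
exists (Tuple size_s); rewrite inE /=.
suff -> : map val (map (@inord n) s) = s by [].
rewrite -map_comp -[RHS]map_id; apply/eq_in_map => x s_x /=.
by rewrite inordK // ltnS (mem_is_sol_leq sol_s s_x).
Qed.

Theorem proposition3 (k1 k2 n : nat) :
  3 <= k1 -> k1 < k2 -> 0 < n -> 0 < nu k1 n -> 0 < nu k2 (n + k2 - k1).
Proof.
move=> _ lt_k1_k2 _ /nu_gt0P [s sol_s]; apply/nu_gt0P.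
exists (nseq (k2 - k1) 1 ++ s).
have le_k1_k2 := ltnW lt_k1_k2.
rewrite -addnBA // addnC -{1}(subnK le_k1_k2).
exact: is_sol_nseq1_cat.
Qed.
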